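(* Let $d\ge2$ and let $K$ be a positive integer. For each $x\in[0,1]$ fix one binary expansion $x=\sum_{j\ge1}a_j^x2^{-j}$, $a_j^x\in\{0,1\}$, and define $\phi_K(x)=\sum_{j=1}^K2a_j^x3^{-d(j-1)}$. Suppose $f:[0,1]^d\to\mathbb{R}$ satisfies $|f(\mathbf x)-f(\mathbf y)|\le Q|\mathbf x-\mathbf y|_\infty^\beta$ for all $\mathbf x,\mathbf y\in[0,1]^d$, for some $0<\beta\le1$ and $Q\ge0$. Then there exists a function $g:\mathcal C\to\mathbb{R}$ on the Cantor set $\mathcal C$ such that $|g(x)-g(y)|\le2^\beta Q|x-y|^{\frac{\beta\log2}{d\log3}}$ for all $x,y\in\mathcal C$, $$\Big|f(\mathbf x)-g\Big(\sum_{p=1}^d3^{-p}\phi_K(x_p)\Big)\Big|\le Q\,2^{-\beta(K-4)}\qquad\text{for all }\mathbf x=(x_1,\ldots,x_d)\in[0,1]^d$$ (note $\sum_{p=1}^d3^{-p}\phi_K(x_p)\in\mathcal C$), and $\sup_{\mathbf x\in[0,1]^d}|f(\mathbf x)|=\sup_{z\in\mathcal C}|g(z)|$.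
   Context: $|\cdot|_\infty$ denotes the maximum norm on $\mathbb{R}^d$. The Cantor set $\mathcal C\subset[0,1]$ is the set of numbers having a ternary expansion using only the digits $0$ and $2$. *)

From HB Require Import structures.
From mathcomp Require Import all_boot all_order all_algebra.
From mathcomp Require Import all_classical all_reals all_analysis.
Set Implicit Arguments. Unset Strict Implicit. Unset Printing Implicit Defensive.
Import Order.TTheory GRing.Theory Num.Theory.
Import numFieldNormedType.Exports.
Local Open Scope classical_set_scope.
Local Open Scope ring_scope.

Definition cube (R : realType) (d : nat) : set ('I_d -> R) :=
  [set x | forall i, 0 <= x i <= 1].

Definition linf_dist (R : realType) (d : nat) (x y : 'I_d -> R) : R :=
  \big[Num.max/0]_(i < d) `|x i - y i|.

Definition cantor_set (R : realType) : set R :=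
  [set x | exists c : nat -> bool,
     (fun n => \sum_(1 <= j < n) (2 * (c j)%:R) / 3 ^+ j) @ \oo --> x].

(* a x is a binary expansion of x for every x in [0,1]:
   x = sum_{j>=1} a_j^x 2^{-j}  (a x 0 is unused). *)
Definition binary_expansion (R : realType) (a : R -> nat -> bool) : Prop :=
  forall x : R, 0 <= x <= 1 ->
    (fun n => \sum_(1 <= j < n) (a x j)%:R / 2 ^+ j) @ \oo --> x.

Definition phiK (R : realType) (d K : nat) (a : R -> nat -> bool) (x : R) : R :=
  \sum_(1 <= j < K.+1) (2 * (a x j)%:R) * 3 ^- (d * (j - 1)).

Definition innerK (R : realType) (d K : nat) (a : R -> nat -> bool)
  (x : 'I_d -> R) : R :=
  \sum_(p < d) 3 ^- (p.+1) * phiK d K a (x p).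

Arguments cube R d : clear implicits.
Arguments cantor_set R : clear implicits.
Arguments phiK {R} d K a x.
Arguments innerK {R} d K a x.

From HB Require Import structures.
From mathcomp Require Import all_boot all_order all_algebra.
From mathcomp Require Import all_classical all_reals all_analysis.
From mathcomp Require Import ring lra zify.
Set Implicit Arguments. Unset Strict Implicit. Unset Printing Implicit Defensive.
Import Order.TTheory GRing.Theory Num.Theory.
Import numFieldNormedType.Exports.
Local Open Scope classical_set_scope.
Local Open Scope ring_scope.

(* A point z of the Cantor set has ternary digits 2c_1, 2c_2, ... with c_j in
   {0,1}, and these digits are unique.  Reading them in blocks of d, the digit
   c_(p+1+d(j-1)) is taken as the j-th binary digit of coordinate p: this
   "decoding" maps the Cantor set onto [0,1]^d, and g := f o decode.
   - Hoelder bound: if x, y in the Cantor set first differ at ternary digit m,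
     then |x - y| >= 3^-m while their decodings share the first (m-1)/d binary
     digits of every coordinate, hence are 2^-((m-1)/d) close in sup norm.
   - Approximation: the ternary digits of innerK x interleave the first K
     binary digits of the coordinates of x, so its decoding is 2^-K close to x.
   - Equal suprema: interleaving all binary digits of x gives a Cantor point
     decoding to x, so g and f have the same range. *)

Section DigitExpansion.
Variables (R : realType) (B : R).
Hypothesis B_gt1 : 1 < B.

(* Partial sums of a base-B expansion whose j-th digit is (B - 1) c_j with
   c_j in {0, 1}: base 2 gives binary expansions, base 3 the Cantor set. *)
Definition digit_sum (c : nat -> bool) (n : nat) : R :=
  \sum_(1 <= j < n) (B - 1) * (c j)%:R / B ^+ j.

Lemma B_gt0 : 0 < B. Proof. exact: lt_trans ltr01 B_gt1. Qed.

Lemma expB_gt0 n : 0 < B ^+ n. Proof. by rewrite exprn_gt0 // B_gt0. Qed.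

Lemma expB_shift k : B / B ^+ k.+1 = 1 / B ^+ k.
Proof. by rewrite exprS; field; rewrite !gt_eqF ?expB_gt0 ?B_gt0. Qed.

Lemma geometric_block n m : (n <= m)%N ->
  \sum_(n <= j < m) (B - 1) / B ^+ j = B / B ^+ n - B / B ^+ m.
Proof.
elim: m => [|m IH]; first by rewrite leqn0 => /eqP ->; rewrite big_geq // subrr.
rewrite leq_eqVlt => /orP [/eqP ->|]; first by rewrite big_geq // subrr.
rewrite ltnS => /[dup] nm /IH {}IH.
rewrite big_nat_recr //= IH exprS.
by field; rewrite !gt_eqF ?expB_gt0 ?B_gt0.
Qed.

Lemma digit_term_bounds (c : nat -> bool) j :
  0 <= (B - 1) * (c j)%:R / B ^+ j <= (B - 1) / B ^+ j.
Proof.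
have hj := ltW (expB_gt0 j); have hB : 0 <= B - 1 by rewrite subr_ge0 ltW.
by case: (c j); rewrite ?mulr1 ?mulr0 ?mul0r ?lexx ?divr_ge0.
Qed.

Lemma digit_sum_split c n m : (1 <= n <= m)%N ->
  digit_sum c m = digit_sum c n + \sum_(n <= j < m) (B - 1) * (c j)%:R / B ^+ j.
Proof. by move=> /andP[h1 h2]; rewrite /digit_sum (@big_cat_nat _ _ _ n). Qed.

Lemma digit_sum_eq c c' n :
  (forall j, (1 <= j < n)%N -> c j = c' j) -> digit_sum c n = digit_sum c' n.
Proof. by move=> h; apply: eq_big_nat => j /h ->. Qed.

Lemma digit_sum_tail c n m : (1 <= n <= m)%N ->
  digit_sum c n <= digit_sum c m <= digit_sum c n + B / B ^+ n.
Proof.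
move=> /[dup] h /andP[_ nm]; rewrite (digit_sum_split c h) lerDl lerD2l.
apply/andP; split; first by apply: sumr_ge0 => j _; case/andP: (digit_term_bounds c j).
apply: le_trans (_ : \sum_(n <= j < m) (B - 1) / B ^+ j <= _).
  by apply: ler_sum => j _; case/andP: (digit_term_bounds c j).
by rewrite geometric_block // gerBl divr_ge0 // ltW ?B_gt0 ?expB_gt0.
Qed.

Lemma digit_sum_ge0 c n : 0 <= digit_sum c n.
Proof. by apply: sumr_ge0 => j _; case/andP: (digit_term_bounds c j). Qed.

Lemma digit_sum_small c n : (n <= 1)%N -> digit_sum c n = 0.
Proof. by move=> n1; rewrite /digit_sum big_geq. Qed.

Lemma digit_sum_le1 c n : digit_sum c n <= 1.
Proof.
case: n => [|n]; first by rewrite digit_sum_small.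
have /andP[_] := @digit_sum_tail c 1 n.+1 erefl.
by rewrite [digit_sum c 1]digit_sum_small // add0r expB_shift expr0 divr1.
Qed.

Lemma digit_sum_cvg c : cvgn (digit_sum c).
Proof.
apply: nondecreasing_is_cvgn; last by exists 1 => _ [n _ <-]; exact: digit_sum_le1.
move=> n m; case: n => [|n] nm; first by rewrite digit_sum_small ?digit_sum_ge0.
by have /andP[] := @digit_sum_tail c n.+1 m nm.
Qed.

Lemma digit_lim_bounds c (l : R) n : digit_sum c @ \oo --> l -> (1 <= n)%N ->
  digit_sum c n <= l <= digit_sum c n + B / B ^+ n.
Proof.
move=> hl n1.
have tail k : (n <= k)%N ->
    digit_sum c n <= digit_sum c k <= digit_sum c n + B / B ^+ n.
  by move=> hk; apply: digit_sum_tail; rewrite n1 hk.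
apply/andP; split.
  by apply: (cvgr_to_ge hl); exists n => // k /= /tail /andP[].
by apply: (cvgr_to_le hl); exists n => // k /= /tail /andP[].
Qed.

Lemma digit_lim_01 c (l : R) : digit_sum c @ \oo --> l -> 0 <= l <= 1.
Proof.
move=> hl; apply/andP; split.
  by apply: (cvgr_to_ge hl); exists 0%N => // k _; exact: digit_sum_ge0.
by apply: (cvgr_to_le hl); exists 0%N => // k _; exact: digit_sum_le1.
Qed.

Lemma digit_lim_close c c' (l l' : R) k :
  digit_sum c @ \oo --> l -> digit_sum c' @ \oo --> l' ->
  (forall j, (1 <= j <= k)%N -> c j = c' j) -> `|l - l'| <= 1 / B ^+ k.
Proof.
move=> hl hl' h.
have /andP[a1 a2] := digit_lim_bounds hl (ltn0Sn k).
have /andP[b1 b2] := digit_lim_bounds hl' (ltn0Sn k).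
rewrite (@digit_sum_eq c c' k.+1 h) expB_shift in a1 a2.
rewrite expB_shift in b2; rewrite ler_norml; apply/andP; split; lra.
Qed.

Lemma digit_lim_sep c c' (l l' : R) m :
  digit_sum c @ \oo --> l -> digit_sum c' @ \oo --> l' -> (1 <= m)%N ->
  (forall j, (1 <= j < m)%N -> c j = c' j) -> c m -> ~~ c' m ->
  (B - 2) / B ^+ m <= l - l'.
Proof.
move=> hl hl' m1 h cm /negbTE c'm.
have /andP[a1 _] := digit_lim_bounds hl (ltn0Sn m).
have /andP[_ b2] := digit_lim_bounds hl' (ltn0Sn m).
have hm : (1 <= m <= m.+1)%N by rewrite m1 leqnSn.
rewrite (digit_sum_split c hm) (digit_sum_split c' hm) !big_nat1 cm c'm in a1 b2.
rewrite (digit_sum_eq h) expB_shift mulr0 mul0r addr0 mulr1 in a1 b2.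
have -> : (B - 2) / B ^+ m = (B - 1) / B ^+ m - 1 / B ^+ m.
  by field; rewrite gt_eqF ?expB_gt0.
lra.
Qed.

Lemma digit_lim_first_diff c c' (l l' : R) :
  digit_sum c @ \oo --> l -> digit_sum c' @ \oo --> l' ->
  (exists2 m, (1 <= m)%N & c m != c' m) ->
  exists m, [/\ (1 <= m)%N, (forall j, (1 <= j < m)%N -> c j = c' j) &
                (B - 2) / B ^+ m <= `|l - l'|].
Proof.
move=> hl hl' [m0 m01 hm0].
have ex : exists m, (0 < m)%N && (c m != c' m) by exists m0; rewrite m01.
case: (ex_minnP ex) => m /andP[m1 hm] hmin.
have agree j : (1 <= j < m)%N -> c j = c' j.
  move=> /andP[j1 jm]; apply/eqP; apply: contraTT jm => hj.
  by rewrite -leqNgt hmin // j1.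
exists m; split => //; move: hm; case hc: (c m); case hc': (c' m) => // _.
  by apply: le_trans (ler_norm _); apply: (digit_lim_sep hl hl' m1 agree); rewrite ?hc ?hc'.
rewrite distrC; apply: le_trans (ler_norm _).
by apply: (digit_lim_sep hl' hl m1 (fun j hj => esym (agree j hj))); rewrite ?hc ?hc'.
Qed.

Lemma digit_lim_inj c c' (l : R) : 2 < B ->
  digit_sum c @ \oo --> l -> digit_sum c' @ \oo --> l ->
  forall i, (1 <= i)%N -> c i = c' i.
Proof.
move=> B2 hl hl' i i1; apply: contrapT => /eqP hi.
have [m [_ _]] := digit_lim_first_diff hl hl' (ex_intro2 _ _ i i1 hi).
rewrite subrr normr0 leNgt => /negP; apply.
by rewrite divr_gt0 ?expB_gt0 // subr_gt0.
Qed.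

End DigitExpansion.

Section CantorDigits.
Variable R : realType.

Lemma cantor_setE (z : R) :
  cantor_set R z <-> exists c, digit_sum (3 : R) c @ \oo --> z.
Proof.
have E (c : nat -> bool) :
    (fun n => \sum_(1 <= j < n) (2 * (c j)%:R) / 3 ^+ j : R) = digit_sum 3 c.
  apply/funext => n; apply: eq_bigr => j _.
  by have -> : (3 : R) - 1 = 2 by lra.
by split => -[c hc]; exists c; rewrite ?E // -E.
Qed.

Definition cantor_digits (z : R) : nat -> bool :=
  if pselect (exists c, digit_sum (3 : R) c @ \oo --> z) is left H
  then projT1 (cid H) else fun _ => false.

Lemma cantor_digitsP z :
  cantor_set R z -> digit_sum (3 : R) (cantor_digits z) @ \oo --> z.
Proof.
by rewrite cantor_setE /cantor_digits; case: pselect => // H _; exact: projT2 (cid H).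
Qed.

Lemma cantor_digits_unique c z : digit_sum (3 : R) c @ \oo --> z ->
  forall i, (1 <= i)%N -> cantor_digits z i = c i.
Proof.
move=> hz; apply: (digit_lim_inj _ _ (cantor_digitsP _) hz); try lra.
by apply/cantor_setE; exists c.
Qed.

Lemma binary_expansionE (c : nat -> bool) :
  (fun n => \sum_(1 <= j < n) (c j)%:R / 2 ^+ j : R) = digit_sum (2 : R) c.
Proof.
apply/funext => n; apply: eq_bigr => j _.
by rewrite (_ : (2 : R) - 1 = 1) ?mul1r //; lra.
Qed.

End CantorDigits.

Section Interleaving.
Variables (R : realType) (d : nat).
Hypothesis d_gt0 : (0 < d)%N.

Definition coord_digits (c : nat -> bool) (p : 'I_d) (j : nat) : bool :=
  c (p.+1 + d * j.-1)%N.

Definition interleave (b : 'I_d -> nat -> bool) (i : nat) : bool :=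
  b (Ordinal (ltn_pmod i.-1 d_gt0)) ((i.-1) %/ d).+1.

Lemma interleaveK b p j : (1 <= j)%N -> coord_digits (interleave b) p j = b p j.
Proof.
move=> j1; rewrite /coord_digits /interleave addSn /=.
have -> : ((p + d * j.-1) %/ d = j.-1)%N.
  by rewrite addnC mulnC divnMDl // divn_small // addn0.
rewrite prednK //; congr b; apply: val_inj => /=.
by rewrite addnC mulnC modnMDl modn_small.
Qed.

Definition decode (c : nat -> bool) : 'I_d -> R :=
  fun p => limn (digit_sum (2 : R) (coord_digits c p)).

Lemma decodeP c p : digit_sum (2 : R) (coord_digits c p) @ \oo --> decode c p.
Proof. by apply: digit_sum_cvg; lra. Qed.

Lemma decode_in_cube c : decode c \in cube R d.
Proof. by rewrite in_setE => p; apply: (digit_lim_01 _ (@decodeP c p)); lra. Qed.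

Lemma decode_ext c c' : (forall i, (1 <= i)%N -> c i = c' i) -> decode c = decode c'.
Proof.
move=> h; apply/funext => p; rewrite /decode.
suff -> : coord_digits c p = coord_digits c' p by [].
by apply/funext => j; rewrite /coord_digits h // addSn.
Qed.

Lemma decode_interleave b p : digit_sum (2 : R) (b p) @ \oo --> decode (interleave b) p.
Proof.
have -> : digit_sum (2 : R) (b p) = digit_sum 2 (coord_digits (interleave b) p).
  by apply/funext => n; apply: digit_sum_eq => j /andP[j1 _]; rewrite interleaveK.
exact: decodeP.
Qed.

Lemma decode_close c c' m : (forall i, (1 <= i < m)%N -> c i = c' i) ->
  forall p, `|decode c p - decode c' p| <= 1 / 2 ^+ ((m - 1) %/ d).
Proof.
move=> h p; apply: (digit_lim_close _ (@decodeP c p) (@decodeP c' p)); first lra.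
move=> j hj; apply: h.
by have := leq_trunc_div (m - 1) d; have := ltn_ord p; nia.
Qed.

Lemma interleave_partial_sum (b : 'I_d -> nat -> bool) K :
  digit_sum (3 : R) (interleave b) (d * K).+1 =
  \sum_(p < d) 3 ^- p.+1 * \sum_(1 <= j < K.+1) (2 * (b p j)%:R) * 3 ^- (d * (j - 1)).
Proof.
elim: K => [|K IH].
  by rewrite muln0 digit_sum_small // big1 // => p _; rewrite big_geq // mulr0.
have h : (1 <= (d * K).+1 <= (d * K.+1).+1)%N by rewrite mulnS; lia.
rewrite (digit_sum_split _ _ h) IH.
have -> : \sum_((d * K).+1 <= j < (d * K.+1).+1) (3 - 1) * (interleave b j)%:R / 3 ^+ j =
   \sum_(p < d) (3 - 1) * (interleave b (p + (d * K).+1))%:R / (3 : R) ^+ (p + (d * K).+1).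
  rewrite -{1}[(d * K).+1]add0n big_addn big_mkord.
  by rewrite (_ : (d * K.+1).+1 - (d * K).+1 = d)%N // subSS mulnS addnK.
rewrite -big_split /=; apply: eq_bigr => p _.
rewrite [in RHS]big_nat_recr //= mulrDr; congr (_ + _).
rewrite (_ : p + (d * K).+1 = p.+1 + d * K.+1.-1)%N ?addnS ?addSn //.
rewrite -[interleave _ _]/(coord_digits (interleave b) p K.+1) interleaveK // subn1 /=.
rewrite -addSn exprD invfM.
by field; rewrite !expf_neq0 //; lra.
Qed.

Lemma interleave_partial_sum_const (b : 'I_d -> nat -> bool) K n :
  (forall p j, (K < j)%N -> b p j = false) -> ((d * K).+1 <= n)%N ->
  digit_sum (3 : R) (interleave b) n = digit_sum (3 : R) (interleave b) (d * K).+1.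
Proof.
move=> hb hn.
have h : (1 <= (d * K).+1 <= n)%N by rewrite hn.
rewrite (digit_sum_split _ _ h) big_nat_cond big1 ?addr0 // => i /andP[/andP[hi _] _].
rewrite /interleave hb ?mulr0 ?mul0r //.
rewrite ltnS -[X in (X <= _)%N](mulKn K d_gt0); apply: leq_div2r; lia.
Qed.

Definition truncated_digits (K : nat) (a : R -> nat -> bool) (x : 'I_d -> R)
  (p : 'I_d) (j : nat) : bool := (j <= K)%N && a (x p) j.

Lemma innerK_expansion K a (x : 'I_d -> R) :
  digit_sum (3 : R) (interleave (truncated_digits K a x)) @ \oo --> innerK d K a x.
Proof.
apply: cvg_near_cst; exists (d * K).+1 => // n /= hn.
rewrite (interleave_partial_sum_const _ hn); last first.
  by move=> p j hj; rewrite /truncated_digits leqNgt hj.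
rewrite interleave_partial_sum; apply: eq_bigr => p _; congr (_ * _).
apply: eq_big_nat => j /andP[_ hj].
by rewrite /truncated_digits -ltnS hj.
Qed.

End Interleaving.

Arguments decode {R d} c _.
Arguments decode_ext {R d c c'} _.
Arguments decode_interleave {R d} d_gt0 b p.
Arguments innerK_expansion {R d} d_gt0 K a x.

Section PowerBounds.
Variable R : realType.

Lemma powR_inv_expn (a x : R) n : 0 < a ->
  (1 / a ^+ n) `^ x = expR (- (x * (n%:R * ln a))).
Proof.
move=> a0; have an : 0 < a ^+ n by rewrite exprn_gt0.
by rewrite /powR gt_eqF ?divr_gt0 // div1r lnV ?posrE // lnXn // mulr_natl mulrN.
Qed.

Lemma powR_expR (a x : R) : 0 < a -> a `^ x = expR (x * ln a).
Proof. by move=> a0; rewrite /powR gt_eqF. Qed.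

Lemma ln2_gt0 : 0 < ln (2 : R). Proof. by apply: ln_gt0; lra. Qed.
Lemma ln3_gt0 : 0 < ln (3 : R). Proof. by apply: ln_gt0; lra. Qed.

(* If 3^-m <= t and m <= d(k+1), then 2^(-beta k) <= 2^beta t^e with
   e = beta log 2 / (d log 3): agreement of k binary digits per coordinate
   turns into the Hoelder modulus on the Cantor set. *)
Lemma holder_modulus (beta Q t : R) (d m k : nat) : 0 < beta -> 0 <= Q -> (0 < d)%N ->
  (m <= d * k.+1)%N -> 1 / 3 ^+ m <= t ->
  Q * (1 / 2 ^+ k) `^ beta <= 2 `^ beta * Q * t `^ (beta * ln 2 / (d%:R * ln 3)).
Proof.
move=> b0 Q0 d0 hm ht.
have l2 := ln2_gt0; have l3 := ln3_gt0.
have dR : 0 < (d%:R : R) by rewrite ltr0n.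
set e := beta * ln 2 / (d%:R * ln 3).
have e0 : 0 <= e by rewrite /e divr_ge0 // ?mulr_ge0 // ltW.
have t3 : 0 < 1 / (3 : R) ^+ m by rewrite divr_gt0 // exprn_gt0.
apply: (@le_trans _ _ (2 `^ beta * Q * (1 / 3 ^+ m) `^ e)); last first.
  apply: ler_wpM2l; first by rewrite mulr_ge0 // powR_ge0.
  by apply: ge0_ler_powR => //; rewrite nnegrE ltW // (lt_le_trans t3 ht).
rewrite !powR_inv_expn // powR_expR // (mulrC (expR _) Q) -mulrA -expRD.
apply: ler_wpM2l => //; rewrite ler_expR.
have md : m%:R / d%:R <= k%:R + (1 : R).
  by rewrite ler_pdivrMr // mulrC natr1 -natrM ler_nat.
have -> : e * (m%:R * ln 3) = beta * ln 2 * (m%:R / d%:R).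
  by rewrite /e; field; rewrite !gt_eqF.
have := ler_wpM2l (ltW (mulr_gt0 b0 l2)) md; lra.
Qed.

Lemma approx_modulus (beta Q : R) (K : nat) : 0 < beta -> 0 <= Q ->
  Q * (1 / 2 ^+ K) `^ beta <= Q * 2 `^ (- (beta * (K%:R - 4))).
Proof.
move=> b0 Q0; rewrite powR_inv_expn ?powR_expR //; try lra.
apply: ler_wpM2l => //; rewrite ler_expR.
have := mulr_gt0 b0 ln2_gt0; nra.
Qed.

End PowerBounds.

Lemma linf_dist_ge0 (R : realType) (d : nat) (x y : 'I_d -> R) : 0 <= linf_dist x y.
Proof. by rewrite /linf_dist; elim/big_ind: _ => // u v hu hv; rewrite le_max hu. Qed.

Lemma linf_dist_le (R : realType) (d : nat) (x y : 'I_d -> R) (r : R) :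
  0 <= r -> (forall i, `|x i - y i| <= r) -> linf_dist x y <= r.
Proof. by move=> r0 h; apply: bigmax_le. Qed.

Lemma block_index_bound (d m : nat) : (0 < d)%N -> (m <= d * ((m - 1) %/ d).+1)%N.
Proof. by move=> d0; have := divn_eq (m - 1) d; have := ltn_pmod (m - 1) d0; nia. Qed.

Section CantorRepresentation.
Variables (R : realType) (d : nat) (f : ('I_d -> R) -> R) (beta Q : R).
Hypotheses (d_gt0 : (0 < d)%N) (beta_gt0 : 0 < beta) (Q_ge0 : 0 <= Q).
Hypothesis f_holder : forall x y, x \in cube R d -> y \in cube R d ->
  `|f x - f y| <= Q * (linf_dist x y) `^ beta.

Lemma f_holder_coordwise (x y : 'I_d -> R) k : x \in cube R d -> y \in cube R d ->
  (forall p, `|x p - y p| <= 1 / 2 ^+ k) -> `|f x - f y| <= Q * (1 / 2 ^+ k) `^ beta.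
Proof.
move=> hx hy hxy; apply: le_trans (f_holder hx hy) _.
have hk : 0 <= 1 / 2 ^+ k :> R by rewrite divr_ge0 // exprn_ge0.
apply: ler_wpM2l => //; apply: ge0_ler_powR; rewrite ?nnegrE ?linf_dist_ge0 //.
  exact: ltW.
exact: linf_dist_le.
Qed.

Definition cantor_outer (z : R) : R := f (decode (cantor_digits z)).

Lemma cantor_outer_holder x y : x \in cantor_set R -> y \in cantor_set R ->
  `|cantor_outer x - cantor_outer y| <=
    2 `^ beta * Q * `|x - y| `^ (beta * ln 2 / (d%:R * ln 3)).
Proof.
rewrite !in_setE => /cantor_digitsP hx /cantor_digitsP hy.
have [[m m1 hm]|same] := pselect (exists2 m, (1 <= m)%N &
                                  cantor_digits x m != cantor_digits y m); last first.
  rewrite /cantor_outer (decode_ext (c' := cantor_digits y)) ?subrr ?normr0.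
    by rewrite !mulr_ge0 ?powR_ge0.
  by move=> i i1; apply: contrapT => /eqP hi; apply: same; exists i.
have [|n [_ agree]] := digit_lim_first_diff _ hx hy (ex_intro2 _ _ m m1 hm); first lra.
rewrite (_ : (3 : R) - 2 = 1); last lra.
move=> sep; apply: le_trans (holder_modulus _ _ _ _ sep) => //.
- apply: f_holder_coordwise; rewrite ?decode_in_cube //.
  exact: decode_close agree.
- exact: block_index_bound.
Qed.

Lemma innerK_in_cantor K a (x : 'I_d -> R) : innerK d K a x \in cantor_set R.
Proof.
rewrite in_setE cantor_setE; exists (interleave d_gt0 (truncated_digits K a x)).
exact: innerK_expansion.
Qed.

Variable a : R -> nat -> bool.
Hypothesis a_binary : binary_expansion a.

Lemma binary_digitsP (t : R) : 0 <= t <= 1 -> digit_sum (2 : R) (a t) @ \oo --> t.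
Proof. by move=> ht; rewrite -binary_expansionE; exact: a_binary. Qed.

(* cantor_outer (innerK x) is f evaluated at x with each coordinate truncated
   to K binary digits, a point at distance at most 2^-K from x. *)
Lemma cantor_outer_approx K x : x \in cube R d ->
  `|f x - cantor_outer (innerK d K a x)| <= Q * 2 `^ (- (beta * (K%:R - 4))).
Proof.
move=> hx; have hx' := hx; rewrite in_setE in hx'.
rewrite /cantor_outer (decode_ext (cantor_digits_unique (innerK_expansion d_gt0 K a x))).
apply: le_trans (approx_modulus K beta_gt0 Q_ge0).
apply: f_holder_coordwise; rewrite ?decode_in_cube // => p.
apply: (digit_lim_close _ (binary_digitsP (hx' p)) (decode_interleave d_gt0 _ p)); first lra.
by move=> j /andP[_ jK]; rewrite /truncated_digits jK.
Qed.

(* Every point of the cube is the decoding of the interleaved binary digits of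
   its coordinates, so cantor_outer and f take the same values. *)
Lemma cantor_outer_range :
  cantor_outer @` cantor_set R = f @` cube R d.
Proof.
apply/seteqP; split => _ [z hz <-].
  by exists (decode (cantor_digits z)) => //; rewrite -in_setE decode_in_cube.
pose e := interleave d_gt0 (fun p => a (z p)).
have he : digit_sum (3 : R) e @ \oo --> limn (digit_sum (3 : R) e).
  by apply: digit_sum_cvg; lra.
exists (limn (digit_sum (3 : R) e)); first by apply/cantor_setE; exists e.
rewrite /cantor_outer (decode_ext (cantor_digits_unique he)); congr f.
apply/funext => p; have hdec := decode_interleave (R := R) d_gt0 (fun p => a (z p)) p.
have hbin := binary_digitsP (hz p); move: hdec hbin; exact: cvg_unique.
Qed.

End CantorRepresentation.

Theorem lemma4 (R : realType) (d K : nat) (hd : (2 <= d)%N) (hK : (0 < K)%N)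
  (a : R -> nat -> bool) (ha : binary_expansion a)
  (f : ('I_d -> R) -> R) (beta Q : R)
  (hbeta : 0 < beta <= 1) (hQ : 0 <= Q)
  (hf : forall x y, x \in cube R d -> y \in cube R d ->
          `|f x - f y| <= Q * (linf_dist x y) `^ beta) :
  exists g : R -> R,
    [/\ forall x y, x \in cantor_set R -> y \in cantor_set R ->
          `|g x - g y| <= 2 `^ beta * Q *
                         `|x - y| `^ (beta * ln 2 / (d%:R * ln 3)),
        forall x, x \in cube R d -> innerK d K a x \in cantor_set R,
        forall x, x \in cube R d ->
          `|f x - g (innerK d K a x)| <= Q * 2 `^ (- (beta * (K%:R - 4))) &
        ereal_sup [set (`|f x|)%:E | x in cube R d] =
        ereal_sup [set (`|g z|)%:E | z in cantor_set R]].
Proof.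
have d_gt0 : (0 < d)%N by apply: leq_trans hd.
have [beta_gt0 _] := andP hbeta.
exists (cantor_outer f); split.
- exact: cantor_outer_holder d_gt0 beta_gt0 hQ hf.
- by move=> x _; exact (innerK_in_cantor d_gt0 K a x).
- by move=> x hx; exact (cantor_outer_approx d_gt0 beta_gt0 hQ hf ha K hx).
- rewrite [RHS](_ : _ = ereal_sup [set (`|y|)%:E | y in cantor_outer f @` cantor_set R]).
    by rewrite (cantor_outer_range f d_gt0 ha) image_comp.
  by rewrite image_comp.
Qed.
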